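(* Let $0\le\mu\le m$, $\epsilon=2^\mu$, let $\mathbf{r}'=(r'_0,\dots,r'_{2^m-1})\in GF(2^m)^{2^m}$ and let $$\mathbf{S}_1(x)=\sum_{j=0}^{2^m-1} r'_j\frac{s_\mu(x)-s_\mu(\omega_j)}{x-\omega_j}.$$ For $0\le l<2^{m-\mu}$ let $\mathbf{r}'_{l,\epsilon}=(r'_{l\epsilon},r'_{l\epsilon+1},\dots,r'_{l\epsilon+\epsilon-1})$. Then $\mathbf{S}_1(x)=\sum_{j=0}^{\epsilon-1}\sigma_j\bar X_j(x)$, where $$(\sigma_0,\dots,\sigma_{\epsilon-1})=\frac{1}{p_{2^m-2^\mu}}\sum_{l=0}^{2^{m-\mu}-1}\mathrm{IFFT}_{\bar{\mathbb X}}\big(\mathbf{r}'_{l,\epsilon},\mu,\omega_{\epsilon l}\big).$$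
   Context: Fix a basis $\{v_0,\dots,v_{m-1}\}$ of $GF(2^m)$ over $GF(2)$. For $0\le j<2^m$ with binary expansion $j=\sum_{i=0}^{m-1} j_i2^i$, set $\omega_j=\sum_{i=0}^{m-1} j_i v_i$. For $0\le\tau\le m$, $s_\tau(x)=\prod_{j=0}^{2^\tau-1}(x-\omega_j)$. Define $X_j(x)=\prod_{i=0}^{m-1}s_i(x)^{j_i}$, $p_j=\prod_{i=0}^{m-1}s_i(v_i)^{j_i}$ and $\bar X_j(x)=X_j(x)/p_j$; $\bar{\mathbb X}=\{\bar X_0,\dots,\bar X_{2^m-1}\}$ is a basis of polynomials of degree $<2^m$. For $0\le\tau\le m$, $\beta\in GF(2^m)$ and $\mathbf{F}=(F_0,\dots,F_{2^\tau-1})\in GF(2^m)^{2^\tau}$, $\mathrm{IFFT}_{\bar{\mathbb X}}(\mathbf{F},\tau,\beta)$ denotes the coefficient vector $(\bar g_0,\dots,\bar g_{2^\tau-1})$ of the unique polynomial $g(x)=\sum_{j=0}^{2^\tau-1}\bar g_j\bar X_j(x)$ of degree $<2^\tau$ satisfying $g(\omega_j+\beta)=F_j$ for $0\le j<2^\tau$. Fractions $\frac{s_\mu(x)-s_\mu(a)}{x-a}$ denote exact polynomial quotients. *)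

From HB Require Import structures.
From mathcomp Require Import all_boot all_order all_algebra all_field.
Set Implicit Arguments. Unset Strict Implicit. Unset Printing Implicit Defensive.
Import GRing.Theory.
Local Open Scope ring_scope.

Section Additive.
Variables (F : finFieldType) (m : nat) (v : 'I_m -> F).

Definition bit (j i : nat) : bool := odd (j %/ 2 ^ i).

Definition omega (j : nat) : F := \sum_(i < m) (bit j i)%:R * v i.

Definition spoly (tau : nat) : {poly F} :=
  \prod_(j < 2 ^ tau) ('X - (omega j)%:P).

Definition Xpoly (j : nat) : {poly F} :=
  \prod_(i < m) spoly i ^+ bit j i.

Definition pcoef (j : nat) : F :=
  \prod_(i < m) (spoly i).[v i] ^+ bit j i.

Definition Xbar (j : nat) : {poly F} := (pcoef j)^-1 *: Xpoly j.

(* IFFT_Xbar(Fv, tau, beta): the coefficient vector (g_0..g_{2^tau-1}) of the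
   polynomial g = sum_j g_j Xbar_j with g(omega_j + beta) = Fv_j for all j<2^tau. *)
Definition IFFT (tau : nat) (Fv : 'I_(2 ^ tau) -> F) (beta : F)
  : {ffun 'I_(2 ^ tau) -> F} :=
  odflt 0 [pick g : {ffun 'I_(2 ^ tau) -> F} |
     [forall j : 'I_(2 ^ tau),
        (\sum_(k < 2 ^ tau) g k *: Xbar k).[omega j + beta] == Fv j]].

End Additive.

Definition at_nat (F : finFieldType) (n : nat) (r : 'I_n -> F) (i : nat) : F :=
  odflt 0 (omap r (insub i)).

From HB Require Import structures.
From mathcomp Require Import all_boot all_order all_algebra all_field.
Import GRing.Theory.
Set Implicit Arguments. Unset Strict Implicit. Unset Printing Implicit Defensive.

(* Let W_n be the F_2-span of v_0, ..., v_(n-1), so that s_n(x) = prod_(w in W_n) (x - w).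
   Translation by an element of W_n permutes W_n, hence
   s_mu(x) - s_mu(a) = prod_(w in W_mu) (x - a - w): the quotient
   (s_mu(x) - s_mu(a)) / (x - a) vanishes on (a + W_mu) \ {a} and takes the value
   D_mu = prod_(0 <> w in W_mu) w at a.  Grouping the omega_j into the cosets
   omega_(eps l) + W_mu, the l-th block of S_1 is thus D_mu times the polynomial of
   degree < eps interpolating r'_(l,eps) on that coset, i.e. D_mu times the
   combination of the Xbar_j with coefficients IFFT(r'_(l,eps), mu, omega_(eps l)).
   Finally D_(i+1) = D_i s_i(v_i), so D_mu p_(2^m - 2^mu) = D_m is the product of all
   nonzero elements of F, which is -1 = 1. *)

Lemma bit0n i : bit 0 i = false.
Proof. by rewrite /bit div0n. Qed.

Lemma bit_small n k i : k < 2 ^ n -> n <= i -> bit k i = false.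
Proof.
move=> ltk lei; rewrite /bit divn_small //.
by apply: leq_trans ltk _; rewrite leq_pexp2l.
Qed.

Lemma bit_block n a k i : k < 2 ^ n ->
  bit (a * 2 ^ n + k) i = if i < n then bit k i else bit a (i - n).
Proof.
move=> ltk; rewrite /bit; case: ltnP => [ltin | lein].
  rewrite -[in 2 ^ n](subnK (ltnW ltin)) expnD mulnA divnMDl ?expn_gt0 // oddD oddM oddX.
  by rewrite subn_eq0 leqNgt ltin andbF.
rewrite -[in 2 ^ i](subnKC lein) expnD divnMA divnMDl ?expn_gt0 //.
by rewrite [k %/ _]divn_small ?addn0.
Qed.

Lemma bit_pow2 n i : bit (2 ^ n) i = (i == n).
Proof.
have := @bit_block n 1 0 i; rewrite mul1n addn0 bit0n expn_gt0 => -> //.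
case: ltngtP => [// | ltni | ->]; last by rewrite subnn.
by rewrite (@bit_small 1) // subn_gt0.
Qed.

Lemma binary_sum_lt (c : nat -> bool) n : \sum_(i < n) c i * 2 ^ i < 2 ^ n.
Proof.
elim: n => [|n IHn]; first by rewrite big_ord0.
rewrite big_ord_recr /= expnS mul2n -addnn -addSn leq_add //.
by case: (c n); rewrite ?mul1n ?mul0n.
Qed.

Lemma bit_binary_sum (c : nat -> bool) n i :
  bit (\sum_(j < n) c j * 2 ^ j) i = (i < n) && c i.
Proof.
elim: n i => [|n IHn] i; first by rewrite big_ord0 bit0n.
rewrite big_ord_recr /= addnC bit_block ?binary_sum_lt // IHn ltnS.
case: ltngtP => [// | ltni | ->].
  by rewrite (@bit_small 1) ?subn_gt0 //; case: (c n).
by rewrite subnn /bit divn1; case: (c n).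
Qed.

Lemma binary_sum_bit n k : k < 2 ^ n -> \sum_(i < n) bit k i * 2 ^ i = k.
Proof.
elim: n k => [|n IHn] k ltk; first by rewrite big_ord0; case: k ltk.
have ltk2 : k %/ 2 < 2 ^ n by rewrite ltn_divLR // mulnC -expnS.
rewrite big_ord_recl /= [in RHS](divn_eq k 2) -(IHn _ ltk2) big_distrl /=.
rewrite addnC; congr (_ + _)%N; last by rewrite /bit divn1 modn2; case: odd.
apply: eq_bigr => i _; rewrite -mulnA -expnSr /bit /bump /= add1n.
by rewrite expnS divnMA.
Qed.

Lemma bit_inj n a b : a < 2 ^ n -> b < 2 ^ n ->
  (forall i, i < n -> bit a i = bit b i) -> a = b.
Proof.
move=> lta ltb eq_ab; rewrite -(binary_sum_bit lta) -(binary_sum_bit ltb).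
by apply: eq_bigr => i _; rewrite eq_ab.
Qed.

Definition xorn n a b := \sum_(i < n) (bit a i (+) bit b i) * 2 ^ i.

Lemma xorn_lt n a b : xorn n a b < 2 ^ n.
Proof. exact: (binary_sum_lt (fun i => bit a i (+) bit b i)). Qed.

Lemma bit_xorn n a b i : a < 2 ^ n -> b < 2 ^ n ->
  bit (xorn n a b) i = bit a i (+) bit b i.
Proof.
move=> lta ltb; rewrite /xorn (bit_binary_sum (fun i => bit a i (+) bit b i)).
by case: ltnP => // lein; rewrite (bit_small lta) // (bit_small ltb).
Qed.

Lemma xorn_gt0 n a b : a < 2 ^ n -> b < 2 ^ n -> a != b -> 0 < xorn n a b.
Proof.
move=> lta ltb; apply: contraNT; rewrite -eqn0Ngt => /eqP xab0.
apply/eqP/(bit_inj lta ltb) => i _; apply/eqP; rewrite -negb_add.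
by rewrite -(bit_xorn _ lta ltb) // xab0 bit0n.
Qed.

Lemma xornK n t k : t < 2 ^ n -> k < 2 ^ n -> xorn n t (xorn n t k) = k.
Proof.
move=> ltt ltk; apply: (bit_inj (xorn_lt n t _) ltk) => i _.
by rewrite !bit_xorn ?xorn_lt // addKb.
Qed.

Lemma bit_pow2_sub m n i : n <= m -> i < m -> bit (2 ^ m - 2 ^ n) i = (n <= i).
Proof.
move=> lenm ltim.
have -> : 2 ^ m - 2 ^ n = (\sum_(j < m - n) true * 2 ^ j) * 2 ^ n + 0.
  have sum_pow2 k : (\sum_(j < k) true * 2 ^ j).+1 = 2 ^ k.
    elim: k => [|k IHk]; first by rewrite big_ord0.
    by rewrite big_ord_recr /= -addSn IHk mul1n expnS mul2n addnn.
  by rewrite addn0 -{1}(subnK lenm) expnD -sum_pow2 mulSn addKn.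
rewrite bit_block ?expn_gt0 // bit0n (bit_binary_sum (fun=> true)) andbT.
by case: ltnP => // lein; rewrite ltn_sub2r // (leq_ltn_trans lein).
Qed.

Lemma big_nat_blocks (R : Type) (idx : R) (op : Monoid.law idx) a b (f : nat -> R) :
  \big[op/idx]_(0 <= j < a * b) f j =
  \big[op/idx]_(l < a) \big[op/idx]_(k < b) f (l * b + k).
Proof.
elim: a => [|a IHa]; first by rewrite mul0n big_geq // big_ord0.
rewrite mulSnr (@big_cat_nat _ _ _ (a * b)) ?leq_addr //= IHa big_ord_recr /=.
congr (op _ _); rewrite -{1}[a * b]add0n big_addn addKn big_mkord.
by apply: eq_bigr => k _; rewrite addnC.
Qed.

Local Open Scope ring_scope.

Section PolyField.
Variable F : fieldType.

Lemma size_sub_monic (p q : {poly F}) n : p \is monic -> q \is monic ->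
  size p = n.+1 -> size q = n.+1 -> (size (p - q)%R <= n)%N.
Proof.
move=> mon_p mon_q szp szq; apply/leq_sizeP => j; rewrite coefB.
rewrite leq_eqVlt => /predU1P[<- | ltnj]; last by rewrite !nth_default ?subr0 ?szp ?szq.
by move: mon_p mon_q; rewrite !monicE !lead_coefE szp szq /= => /eqP-> /eqP->; rewrite subrr.
Qed.

Lemma poly_decomp_basis (b : nat -> {poly F}) n :
  (forall k, (k < n)%N -> size (b k) = k.+1) ->
  forall p : {poly F}, (size p <= n)%N ->
  exists c : nat -> F, p = \sum_(k < n) c k *: b k.
Proof.
elim: n => [|n IHn] szb p szp.
  by exists (fun=> 0); rewrite big_ord0; apply/eqP; rewrite -size_poly_eq0 -leqn0.
have szbn := szb n (ltnSn n).
have lcb_neq0 : lead_coef (b n) != 0 by rewrite lead_coef_eq0 -size_poly_eq0 szbn.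
pose a := p`_n / lead_coef (b n).
have szp' : (size (p - a *: b n)%R <= n)%N.
  apply/leq_sizeP => j; rewrite coefB coefZ leq_eqVlt => /predU1P[<- | ltnj]; last first.
    by rewrite !nth_default ?mulr0 ?subr0 ?szbn // (leq_trans szp).
  by rewrite -[(b n)`_n]/((b n)`_(n.+1).-1) -szbn -lead_coefE divfK ?subrr.
have [c Ec] := IHn (fun k ltkn => szb k (ltnW ltkn)) _ szp'.
exists (fun k => if k == n then a else c k).
rewrite big_ord_recr /= eqxx (eq_bigr (fun k : 'I_n => c k *: b k)) -?Ec ?subrK //.
by move=> k _; rewrite (ltn_eqF (ltn_ord k)).
Qed.

Lemma size_prod_XsubC_ord N (f : 'I_N -> F) :
  size (\prod_(i < N) ('X - (f i)%:P)) = N.+1.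
Proof. by rewrite size_prod_XsubC /index_enum unlock -enumT size_enum_ord. Qed.

End PolyField.

Lemma prod_opp_nonzero (F : finFieldType) : \prod_(x : F | x != 0) - x = -1.
Proof.
have gen := finField_genPoly F.
rewrite (bigD1 0) //= subr0 in gen.
have XnK : 'X^#|F| - 'X = 'X * ('X^(#|F|.-1) - 1 : {poly F}).
  by rewrite mulrBr mulr1 -exprS prednK // (ltnW (finNzRing_gt1 F)).
move: gen; rewrite XnK => /(mulfI (negbT (polyX_eq0 _))) /(congr1 (horner^~ 0)).
rewrite hornerD hornerN hornerXn hornerC expr0n -subn1 subn_eq0 leqNgt.
rewrite finNzRing_gt1 sub0r horner_prod => ->.
by apply: eq_bigr => x _; rewrite hornerXsubC sub0r.
Qed.

Section AdditiveBasis.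
Variables (F : finFieldType) (m : nat) (v : 'I_m -> F).
Hypothesis Hchar : (2%:R : F) = 0.

Local Notation om := (omega v).

Let F_pchar2 : 2%N \in [pchar F].
Proof. by rewrite inE /= Hchar eqxx. Qed.

Let natr_addb (a b : bool) : ((a (+) b)%:R : F) = a%:R + b%:R.
Proof. by case: a; case: b; rewrite /= ?addr0 ?add0r ?addrr_pchar2. Qed.

Lemma omega0 : om 0 = 0.
Proof. by rewrite /omega big1 // => i _; rewrite bit0n mul0r. Qed.

Lemma omega_xorn n a b : (a < 2 ^ n)%N -> (b < 2 ^ n)%N ->
  om (xorn n a b) = om a + om b.
Proof.
move=> lta ltb; rewrite /omega -big_split; apply: eq_bigr => i _ /=.
by rewrite bit_xorn // natr_addb mulrDl.
Qed.

Lemma omega_block n a k : (k < 2 ^ n)%N -> om (a * 2 ^ n + k) = om (a * 2 ^ n) + om k.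
Proof.
move=> ltk; rewrite /omega -big_split; apply: eq_bigr => i _ /=.
have bit_a : bit (a * 2 ^ n) i = if (i < n)%N then false else bit a (i - n).
  by rewrite -[(a * 2 ^ n)%N]addn0 bit_block ?expn_gt0 // bit0n.
rewrite -mulrDl bit_a bit_block //.
by case: ltnP => [_ | /(bit_small ltk)->]; rewrite ?add0r ?addr0.
Qed.

Lemma omega_pow2 (i : 'I_m) : om (2 ^ i) = v i.
Proof.
rewrite /omega (bigD1 i) //= big1 ?addr0 => [|j neq_ji]; first by rewrite bit_pow2 eqxx mul1r.
by rewrite bit_pow2 val_eqE (negbTE neq_ji) mul0r.
Qed.

Lemma omega_pow2D (i : 'I_m) t : (t < 2 ^ i)%N -> om (2 ^ i + t) = v i + om t.
Proof. by move=> ltt; rewrite -[(2 ^ i)%N]mul1n omega_block // mul1n omega_pow2. Qed.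

Hypothesis Hindep : forall b : 'I_m -> bool,
  \sum_(i < m) (b i)%:R * v i = 0 -> forall i, b i = false.

Lemma omega_inj a b : (a < 2 ^ m)%N -> (b < 2 ^ m)%N -> om a = om b -> a = b.
Proof.
move=> lta ltb eq_om; apply: (bit_inj lta ltb) => i ltim.
have sum0 : \sum_(j < m) (bit a j (+) bit b j)%:R * v j = 0.
  transitivity (om a + om b); last by rewrite eq_om addrr_pchar2.
  rewrite /omega -big_split.
  by apply: eq_bigr => j _; rewrite natr_addb mulrDl.
by apply/eqP; rewrite -negb_add (Hindep sum0 (Ordinal ltim)).
Qed.

Lemma omega_neq0 a : (0 < a < 2 ^ m)%N -> om a != 0.
Proof.
case/andP=> gt0a lta; apply: contraTneq gt0a => om0.
by rewrite (@omega_inj a 0) ?expn_gt0 // omega0.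
Qed.

Section Coset.
Variables (n : nat) (Hn : (n <= m)%N).

Let ltn_pow2 k : (k < 2 ^ n)%N -> (k < 2 ^ m)%N.
Proof. by move=> ltk; apply: leq_trans ltk (leq_pexp2l _ Hn). Qed.

Lemma coset_poly_eq0 beta (p : {poly F}) : (size p <= 2 ^ n)%N ->
  (forall k : 'I_(2 ^ n), p.[beta + om k] = 0) -> p = 0.
Proof.
move=> szp p_coset0; apply: (@roots_geq_poly_eq0 _ _ [seq beta + om k | k : 'I_(2 ^ n)]).
- by apply/allP => _ /mapP[k _ ->]; apply/eqP/p_coset0.
- rewrite map_inj_uniq ?enum_uniq // => k1 k2 /addrI.
  by move/omega_inj => eq_k; apply/val_inj/eq_k; apply: ltn_pow2.
- by rewrite size_map size_enum_ord.
Qed.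

Lemma size_spoly : size (spoly v n) = (2 ^ n).+1.
Proof. exact: size_prod_XsubC_ord. Qed.

Lemma spoly_translate a t : (t < 2 ^ n)%N -> (spoly v n).[a + om t] = (spoly v n).[a].
Proof.
move=> ltt; rewrite /spoly !horner_prod.
pose tr (k : 'I_(2 ^ n)) := Ordinal (xorn_lt n t k).
have tr_inj : injective tr.
  by apply: (can_inj (g := tr)) => k; apply: val_inj; rewrite /= xornK.
rewrite [RHS](reindex_inj tr_inj); apply: eq_bigr => k _.
by rewrite !hornerXsubC omega_xorn // opprD addrA (oppr_pchar2 F_pchar2 (om t)).
Qed.

Lemma spoly_subC a :
  spoly v n - ((spoly v n).[a])%:P = \prod_(t < 2 ^ n) ('X - (a + om t)%:P).
Proof.
apply/eqP; rewrite -subr_eq0 addrAC; apply/eqP/(coset_poly_eq0 (beta := a)).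
  apply: leq_trans (size_polyD _ _) _; rewrite geq_max size_polyN.
  rewrite (leq_trans (size_polyC_leq1 _)) ?expn_gt0 // andbT.
  by apply: size_sub_monic; rewrite ?monic_prod_XsubC ?size_spoly ?size_prod_XsubC_ord.
move=> k; rewrite !(hornerD, hornerN) hornerC spoly_translate // addrAC subrr sub0r horner_prod.
by rewrite (bigD1 k) //= hornerXsubC subrr mul0r oppr0.
Qed.

Definition spoly_quot a := \prod_(t < 2 ^ n | (0 < t)%N) ('X - (a + om t)%:P).

Lemma spoly_quot_factor a :
  \prod_(t < 2 ^ n) ('X - (a + om t)%:P) = ('X - a%:P) * spoly_quot a.
Proof.
rewrite (bigD1 (Ordinal (expn_gt0 2 n))) //= omega0 addr0; congr (_ * _).
by apply: eq_bigl => t; rewrite -val_eqE /= lt0n.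
Qed.

Lemma spoly_quotE a : (spoly v n - ((spoly v n).[a])%:P) %/ ('X - a%:P) = spoly_quot a.
Proof. by rewrite spoly_subC spoly_quot_factor mulrC mulpK ?monic_neq0 ?monicXsubC. Qed.

Lemma size_spoly_quot a : size (spoly_quot a) = (2 ^ n)%N.
Proof.
have := size_prod_XsubC_ord (fun t : 'I_(2 ^ n) => a + om t).
rewrite spoly_quot_factor size_monicM ?monicXsubC ?monic_neq0 ?monic_prod_XsubC //.
by rewrite size_XsubC => -[].
Qed.

Lemma spoly_quot_root a s : (0 < s < 2 ^ n)%N -> (spoly_quot a).[a + om s] = 0.
Proof.
case/andP=> gt0s lts; rewrite horner_prod (bigD1 (Ordinal lts)) //=.
by rewrite hornerXsubC subrr mul0r.
Qed.

Definition omega_prod := \prod_(t < 2 ^ n | (0 < t)%N) om t.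

Lemma spoly_quot_self a : (spoly_quot a).[a] = omega_prod.
Proof.
rewrite horner_prod; apply: eq_bigr => t _.
by rewrite hornerXsubC opprD addrA subrr add0r oppr_pchar2.
Qed.

End Coset.

Lemma horner_spoly_basis (i : 'I_m) :
  (spoly v i).[v i] = \prod_(t < 2 ^ i) om (2 ^ i + t).
Proof.
rewrite horner_prod; apply: eq_bigr => t _.
by rewrite hornerXsubC oppr_pchar2 // omega_pow2D.
Qed.

Lemma spoly_basis_neq0 (i : 'I_m) : (spoly v i).[v i] != 0.
Proof.
rewrite horner_spoly_basis; apply/prodf_neq0 => t _; apply: omega_neq0.
have lt_i_m : (2 ^ i.+1 <= 2 ^ m)%N by rewrite leq_pexp2l.
rewrite addn_gt0 expn_gt0; apply: leq_trans lt_i_m.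
by rewrite expnS mul2n -addnn ltn_add2l.
Qed.

Lemma omega_prodS (i : 'I_m) : omega_prod i.+1 = omega_prod i * (spoly v i).[v i].
Proof.
rewrite /omega_prod horner_spoly_basis -!big_mkord expnS mul2n -addnn.
rewrite (@big_cat_nat _ _ _ (2 ^ i)) ?leq_addr //=; congr (_ * _).
rewrite -{1}[(2 ^ i)%N]add0n big_addn addnK big_mkord.
apply: eq_big => [t | t _]; last by rewrite addnC.
by rewrite addn_gt0 expn_gt0 orbT.
Qed.

Lemma omega_prodE n : (n <= m)%N ->
  omega_prod n = \prod_(i < m | (i < n)%N) (spoly v i).[v i].
Proof.
elim: n => [|n IHn] ltnm.
  rewrite big_pred0 => [|i]; last by rewrite ltn0.
  rewrite /omega_prod big_pred0 => [//| [t /=]].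
  by rewrite expn0 ltnS leqn0 => /eqP->.
rewrite (omega_prodS (Ordinal ltnm)) (IHn (ltnW ltnm)) [RHS](bigD1 (Ordinal ltnm)) //= mulrC.
by congr (_ * _); apply: eq_bigl => i; rewrite ltnS ltn_neqAle -val_eqE andbC.
Qed.

Lemma pcoef_neq0 k : pcoef v k != 0.
Proof. by apply/prodf_neq0 => i _; rewrite expf_neq0 ?spoly_basis_neq0. Qed.

Lemma size_Xbar k : (k < 2 ^ m)%N -> size (Xbar v k) = k.+1.
Proof.
move=> ltk; rewrite size_scale ?invr_eq0 ?pcoef_neq0 // size_prod => [|i _]; last first.
  by rewrite expf_neq0 ?monic_neq0 ?monic_prod_XsubC.
have size_spolyX i b : size (spoly v i ^+ b) = (2 ^ i * b).+1.
  rewrite -[LHS]prednK ?size_poly_gt0 ?expf_neq0 ?monic_neq0 ?monic_prod_XsubC //.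
  by rewrite size_exp size_spoly.
under eq_bigr do rewrite size_spolyX -addn1.
rewrite big_split sum1_card cardT size_enum_ord -addSn addnK -[in RHS](binary_sum_bit ltk).
by congr _.+1; apply: eq_bigr => i _; rewrite mulnC.
Qed.

Lemma omega_prod_neq0 n : (n <= m)%N -> omega_prod n != 0.
Proof.
move=> lenm; apply/prodf_neq0 => t gt0t; apply: omega_neq0.
by rewrite gt0t (leq_trans (ltn_ord t)) ?leq_pexp2l.
Qed.

Lemma IFFT_spec tau (Fv : 'I_(2 ^ tau) -> F) beta (q : {poly F}) : (tau <= m)%N ->
  (size q <= 2 ^ tau)%N -> (forall j : 'I_(2 ^ tau), q.[om j + beta] = Fv j) ->
  \sum_(k < 2 ^ tau) IFFT v Fv beta k *: Xbar v k = q.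
Proof.
move=> letm szq q_interp.
have ltn_pow2 k : (k < 2 ^ tau)%N -> (k < 2 ^ m)%N.
  by move=> ltk; apply: leq_trans ltk (leq_pexp2l _ letm).
have size_comb (g : 'I_(2 ^ tau) -> F) :
    (size (\sum_(k < 2 ^ tau) g k *: Xbar v k)%R <= 2 ^ tau)%N.
  apply: leq_trans (size_sum _ _ _) _; apply/bigmax_leqP => k _.
  by rewrite (leq_trans (size_scale_leq _ _)) // size_Xbar ?ltn_pow2.
rewrite /IFFT; case: pickP => [g /forallP g_interp | no_interp] /=.
  apply/eqP; rewrite -subr_eq0; apply/eqP/(coset_poly_eq0 letm (beta := beta)).
    by apply: leq_trans (size_polyD _ _) _; rewrite geq_max size_comb size_polyN szq.
  by move=> k; rewrite hornerD hornerN [beta + _]addrC (eqP (g_interp k)) q_interp subrr.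
have [c qE] := poly_decomp_basis (fun k ltk => size_Xbar (ltn_pow2 k ltk)) szq.
move/negbT/forallPn: (no_interp [ffun k : 'I_(2 ^ tau) => c k]) => -[j] /negP[]; apply/eqP.
under eq_bigr do rewrite ffunE.
by rewrite -qE q_interp.
Qed.

Lemma spoly_quot_interp n beta (r : 'I_(2 ^ n) -> F) (j : 'I_(2 ^ n)) :
  (\sum_(k < 2 ^ n) r k *: spoly_quot n (beta + om k)).[om j + beta] =
  r j * omega_prod n.
Proof.
rewrite horner_sum (bigD1 j) //= big1 ?addr0 => [|k neq_kj].
  by rewrite hornerZ addrC spoly_quot_self.
have -> : om j + beta = (beta + om k) + om (xorn n k j).
  by rewrite omega_xorn // addrA -(addrA beta) addrr_pchar2 // addr0 addrC.
by rewrite hornerZ spoly_quot_root ?mulr0 // xorn_gt0 ?xorn_lt.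
Qed.

Lemma IFFT_spoly_quot n beta (r : 'I_(2 ^ n) -> F) : (n <= m)%N ->
  \sum_(k < 2 ^ n) IFFT v r beta k *: Xbar v k =
  (omega_prod n)^-1 *: \sum_(k < 2 ^ n) r k *: spoly_quot n (beta + om k).
Proof.
move=> lenm; apply: IFFT_spec => // [|j].
  apply: leq_trans (size_scale_leq _ _) _; apply: leq_trans (size_sum _ _ _) _.
  by apply/bigmax_leqP => k _; rewrite (leq_trans (size_scale_leq _ _)) ?size_spoly_quot.
by rewrite hornerZ spoly_quot_interp mulrCA mulVf ?mulr1 ?omega_prod_neq0.
Qed.

Hypothesis Hcard : #|F| = (2 ^ m)%N.

Lemma omega_prod_all : omega_prod m = 1.
Proof.
have om_bij : bijective (fun t : 'I_(2 ^ m) => om t).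
  apply: inj_card_bij; last by rewrite card_ord Hcard.
  by move=> t1 t2 /omega_inj eq_t; apply/val_inj/eq_t.
have := prod_opp_nonzero F; rewrite oppr_pchar2 // => <-.
rewrite (reindex _ (onW_bij _ om_bij)) /=; apply: eq_big => [t | t _]; last first.
  by rewrite oppr_pchar2.
apply/idP/idP => [gt0t | ]; first by apply: omega_neq0; rewrite gt0t ltn_ord.
by apply: contraNT; rewrite lt0n negbK => /eqP t0; rewrite t0 omega0.
Qed.

Lemma omega_prod_pcoef n : (n <= m)%N -> omega_prod n * pcoef v (2 ^ m - 2 ^ n) = 1.
Proof.
move=> lenm; rewrite -omega_prod_all !omega_prodE // /pcoef.
rewrite [RHS](bigID (fun i : 'I_m => (i < n)%N)) [X in _ * X](bigID (fun i : 'I_m => (i < n)%N)) /=.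
rewrite [X in _ * (X * _)]big1 => [|i ltin]; last by rewrite bit_pow2_sub // leqNgt ltin.
rewrite mul1r; congr (_ * _); first by apply: eq_bigl => i; rewrite ltn_ord.
apply: eq_big => [i | i lein]; first by rewrite ltn_ord.
by rewrite bit_pow2_sub // leqNgt lein.
Qed.

End AdditiveBasis.

Theorem lemma4 (F : finFieldType) (m : nat) (v : 'I_m -> F)
  (Hchar : (2%:R : F) = 0)
  (Hcard : #|F| = (2 ^ m)%N)
  (Hindep : forall b : 'I_m -> bool,
      \sum_(i < m) (b i)%:R * v i = 0 -> forall i, b i = false)
  (Hspan : forall x : F, exists b : 'I_m -> bool,
      x = \sum_(i < m) (b i)%:R * v i)
  (mu : nat) (Hmu : (mu <= m)%N) (r' : 'I_(2 ^ m) -> F) :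
  let eps := (2 ^ mu)%N in
  let S1 : {poly F} :=
    \sum_(j < 2 ^ m)
      r' j *: ((spoly v mu - ((spoly v mu).[omega v j])%:P)
                 %/ ('X - (omega v j)%:P)) in
  let r'_le (l : nat) : 'I_(2 ^ mu) -> F :=
    fun k => at_nat r' (l * eps + k)%N in
  let sigma (j : 'I_(2 ^ mu)) : F :=
    (pcoef v (2 ^ m - 2 ^ mu))^-1 *
      \sum_(l < 2 ^ (m - mu)) IFFT v (r'_le l) (omega v (eps * l)) j in
  S1 = \sum_(j < 2 ^ mu) sigma j *: Xbar v j.
Proof.
move=> eps S1 r'_le sigma.
have pcoef_inv : (pcoef v (2 ^ m - 2 ^ mu))^-1 = omega_prod v mu.
  by apply: mulr1_eq; rewrite mulrC (omega_prod_pcoef Hchar Hindep Hcard Hmu).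
have S1_blocks : S1 = \sum_(l < 2 ^ (m - mu)) \sum_(k < 2 ^ mu)
    r'_le l k *: spoly_quot v mu (omega v (eps * l) + omega v k).
  rewrite /S1 (eq_bigr (fun j : 'I_(2 ^ m) => at_nat r' j *: spoly_quot v mu (omega v j))).
    rewrite -(big_mkord xpredT (fun j => at_nat r' j *: spoly_quot v mu (omega v j))).
    rewrite -{1}(subnK Hmu) expnD big_nat_blocks; apply: eq_bigr => l _.
    by apply: eq_bigr => k _; rewrite omega_block // [(eps * l)%N]mulnC.
  by move=> j _; rewrite (spoly_quotE Hchar Hindep Hmu) /at_nat valK.
rewrite S1_blocks /sigma pcoef_inv.
under [RHS]eq_bigr do rewrite -scalerA scaler_suml.
rewrite -scaler_sumr [in RHS]exchange_big scaler_sumr /=; apply: eq_bigr => l _.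
by rewrite (IFFT_spoly_quot Hchar Hindep _ _ Hmu) scalerA mulfV ?scale1r ?omega_prod_neq0.
Qed.
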